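(* Let $a,b$ be fixed nonzero complex constants, let $\{a_i\},\{b_i\},\{c_i\},\{d_i\}$ ($i\in\mathbb{Z}$) be complex sequences of nonzero numbers, and let $m,n\ge0$ be integers such that for $-n\le j\le m$ the quantities $(1-aa_jc_j)(1-b\frac{a_j}{c_j})$, $(1-aa_jd_j)(1-b\frac{a_j}{d_j})$, $(b_j-c_j)(1-\frac{b}{ab_jc_j})$, $(b_j-d_j)(1-\frac{b}{ab_jd_j})$ are nonzero. Then $$\sum_{k=-n}^{m}(1-aa_kb_k)\Big(1-b\frac{a_k}{b_k}\Big)(c_k-d_k)\Big(1-\frac{b}{ac_kd_k}\Big)\frac{\prod_{j=1}^{k-1}(1-aa_jc_j)(1-b\frac{a_j}{c_j})}{\prod_{j=1}^{k}(1-aa_jd_j)(1-b\frac{a_j}{d_j})}\frac{\prod_{j=1}^{k-1}(b_j-d_j)(1-\frac{b}{ab_jd_j})}{\prod_{j=1}^{k}(b_j-c_j)(1-\frac{b}{ab_jc_j})}$$ $$=\frac{\prod_{j=1}^{m}(1-aa_jc_j)(1-b\frac{a_j}{c_j})}{\prod_{j=1}^{m}(1-aa_jd_j)(1-b\frac{a_j}{d_j})}\frac{\prod_{j=1}^{m}(b_j-d_j)(1-\frac{b}{ab_jd_j})}{\prod_{j=1}^{m}(b_j-c_j)(1-\frac{b}{ab_jc_j})}-\frac{\prod_{j=-n}^{0}(1-aa_jd_j)(1-b\frac{a_j}{d_j})}{\prod_{j=-n}^{0}(1-aa_jc_j)(1-b\frac{a_j}{c_j})}\frac{\prod_{j=-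n}^{0}(b_j-c_j)(1-\frac{b}{ab_jc_j})}{\prod_{j=-n}^{0}(b_j-d_j)(1-\frac{b}{ab_jd_j})}.$$
   Context: Products over integer ranges follow the convention: $\prod_{j=k}^{m}A_j=A_k\cdots A_m$ if $m\ge k$; $=1$ if $m=k-1$; $=(A_{m+1}\cdots A_{k-1})^{-1}$ if $m\le k-2$. The constants $a,b$ are distinct objects from the sequences $a_k,b_k$. *)

From HB Require Import structures.
From mathcomp Require Import all_boot all_order all_algebra.
From mathcomp Require Import reals.
From mathcomp.real_closed Require Export complex.
Set Implicit Arguments. Unset Strict Implicit. Unset Printing Implicit Defensive.
Import Order.TTheory GRing.Theory Num.Theory.
Local Open Scope ring_scope.

(* Product over an integer range with the paper's convention:
   prodZ A k m = A k * ... * A m                if m >= k,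
               = 1                              if m = k - 1,
               = (A (m+1) * ... * A (k-1))^-1   if m <= k - 2. *)
Definition prodZ (F : fieldType) (A : int -> F) (k m : int) : F :=
  if (k <= m)%R then \prod_(0 <= i < absz (m - k + 1)%R) A (k + i%:Z)%R
  else if m == k - 1 then 1
  else (\prod_(0 <= i < absz (k - 1 - m)%R) A (m + 1 + i%:Z)%R)^-1.

Definition sumZ (F : fieldType) (A : int -> F) (lo hi : int) : F :=
  \sum_(0 <= i < absz (hi - lo + 1)%R) A (lo + i%:Z)%R.

From HB Require Import structures.
From mathcomp Require Import all_boot all_order all_algebra.
From mathcomp Require Import reals.
From mathcomp.real_closed Require Import complex.
From mathcomp Require Import ring zify.
Import Order.TTheory GRing.Theory Num.Theory.
Local Open Scope ring_scope.

(* Let T k be the first term of the right-hand side with m replaced by k.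
   After cancelling the common partial products, the k-th summand equals
   T k - T (k - 1) because of the identity
     (1 - a x y)(1 - b x/y)(c - d)(1 - b/(a c d)) = P(c) Q(d) - P(d) Q(c),
     P(z) = (1 - a x z)(1 - b x/z),   Q(z) = (y - z)(1 - b/(a y z)).
   The sum thus telescopes to T m - T (-n-1), and by the convention for
   products over reversed ranges T (-n-1) is the second term. *)

Lemma sumZ_telescope (F : fieldType) (f T : int -> F) (lo hi : int) :
  lo <= hi + 1 ->
  (forall k, lo <= k <= hi -> f k = T k - T (k - 1)) ->
  sumZ f lo hi = T hi - T (lo - 1).
Proof.
move=> lo_le fE; rewrite /sumZ.
rewrite (@telescope_sumr_eq _ _ _ (fun i => T (lo + i%:Z - 1))) //.
- by rewrite addr0; congr (T _ - _); lia.
- move=> i /andP[_ lt_i]; rewrite fE; last by lia.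
  by congr (T _ - T _); lia.
Qed.

Lemma prodZ1_nat (F : fieldType) (A : int -> F) (n : nat) :
  prodZ A 1 n%:Z = \prod_(0 <= i < n) A (1 + i%:Z).
Proof.
rewrite /prodZ; case: n => [|n] /=; first by rewrite big_geq.
by have -> : (n.+1 - 1 + 1 = n.+1)%N by lia.
Qed.

Lemma prodZ1_neg (F : fieldType) (A : int -> F) (n : nat) :
  prodZ A 1 (- n%:Z) = (\prod_(0 <= i < n) A (- n%:Z + 1 + i%:Z))^-1.
Proof.
rewrite /prodZ; case: n => [|n]; first by rewrite /= big_geq // invr1.
have -> : (1 <= - (n.+1)%:Z :> int) = false by lia.
have -> : (- (n.+1)%:Z == 1 - 1 :> int) = false by lia.
by have -> : (1 - 1 - - (n.+1)%:Z :> int) = n.+1 by lia.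
Qed.

Lemma prodZ1_pred_opp (F : fieldType) (A : int -> F) (n : nat) :
  prodZ A 1 (- n%:Z - 1) = (prodZ A (- n%:Z) 0)^-1.
Proof.
have -> : - n%:Z - 1 = - (n.+1)%:Z by lia.
rewrite prodZ1_neg /prodZ ifT; last by lia.
have -> : `|(0 - - n%:Z + 1)%R|%N = n.+1 by lia.
by congr (_^-1); apply: eq_bigr => i _; congr (A _); lia.
Qed.

Lemma prodZ1S (F : fieldType) (A : int -> F) (k : int) :
  A k != 0 -> prodZ A 1 k = prodZ A 1 (k - 1) * A k.
Proof.
case: k => [[|n]|n] Ak_neq0.
- have -> : Posz 0 - 1 = - (1%:Z) by [].
  rewrite prodZ1_nat prodZ1_neg big_geq // big_nat1.
  by rewrite mulVf.
- have -> : Posz n.+1 - 1 = n%:Z by lia.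
  by rewrite !prodZ1_nat big_nat_recr.
- rewrite NegzE.
  have -> : - (n.+1)%:Z - 1 = - (n.+2)%:Z by lia.
  rewrite !prodZ1_neg [in RHS]big_nat_recl // invfM.
  have -> : - (n.+2)%:Z + 1 + 0%:Z = - (n.+1)%:Z by lia.
  rewrite -NegzE mulrAC mulVf // mul1r.
  by congr (_^-1); apply: eq_bigr => i _; congr (A _); lia.
Qed.

Lemma three_term_identity (F : fieldType) (a b x y c d : F) :
  a != 0 -> y != 0 -> c != 0 -> d != 0 ->
  (1 - a * x * y) * (1 - b * (x / y)) * (c - d) * (1 - b / (a * c * d))
  = (1 - a * x * c) * (1 - b * (x / c)) * ((y - d) * (1 - b / (a * y * d)))
  - (1 - a * x * d) * (1 - b * (x / d)) * ((y - c) * (1 - b / (a * y * c))).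
Proof. by move=> *; field; apply/and4P. Qed.

Lemma ratio_product_step (F : fieldType) (pc pd qc qd Pc Pd Qc Qd : F) :
  Pd != 0 -> Qc != 0 ->
  (Pc * Qd - Pd * Qc) * (pc / (pd * Pd)) * (qd / (qc * Qc))
  = pc * Pc / (pd * Pd) * (qd * Qd / (qc * Qc)) - pc / pd * (qd / qc).
Proof.
move=> Pd_neq0 Qc_neq0; rewrite !invfM.
by set u := pd^-1; set v := qc^-1; field; apply/andP.
Qed.

Local Open Scope complex_scope.

Theorem corollary3p5 (R : realType) (a b : R[i])
  (as_ bs cs ds : int -> R[i]) (m n : nat) :
  a != 0 -> b != 0 ->
  (forall i, as_ i != 0) -> (forall i, bs i != 0) ->
  (forall i, cs i != 0) -> (forall i, ds i != 0) ->
  (forall j : int, - (n%:Z) <= j <= m%:Z ->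
     [/\ (1 - a * as_ j * cs j) * (1 - b * (as_ j / cs j)) != 0,
         (1 - a * as_ j * ds j) * (1 - b * (as_ j / ds j)) != 0,
         (bs j - cs j) * (1 - b / (a * bs j * cs j)) != 0 &
         (bs j - ds j) * (1 - b / (a * bs j * ds j)) != 0]) ->
  let PC := fun j => (1 - a * as_ j * cs j) * (1 - b * (as_ j / cs j)) in
  let PD := fun j => (1 - a * as_ j * ds j) * (1 - b * (as_ j / ds j)) in
  let QC := fun j => (bs j - cs j) * (1 - b / (a * bs j * cs j)) in
  let QD := fun j => (bs j - ds j) * (1 - b / (a * bs j * ds j)) in
  sumZ (fun k =>
          (1 - a * as_ k * bs k) * (1 - b * (as_ k / bs k))
          * (cs k - ds k) * (1 - b / (a * cs k * ds k))
          * (prodZ PC 1 (k - 1) / prodZ PD 1 k)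
          * (prodZ QD 1 (k - 1) / prodZ QC 1 k))
       (- (n%:Z)) (m%:Z)
  = (prodZ PC 1 m%:Z / prodZ PD 1 m%:Z) * (prodZ QD 1 m%:Z / prodZ QC 1 m%:Z)
    - (prodZ PD (- (n%:Z)) 0 / prodZ PC (- (n%:Z)) 0)
      * (prodZ QC (- (n%:Z)) 0 / prodZ QD (- (n%:Z)) 0).
Proof.
move=> a_neq0 _ _ bs_neq0 cs_neq0 ds_neq0 factors_neq0 PC PD QC QD.
pose T k := prodZ PC 1 k / prodZ PD 1 k * (prodZ QD 1 k / prodZ QC 1 k).
rewrite (@sumZ_telescope _ _ T); [|lia|].
- rewrite /T !prodZ1_pred_opp !invrK.
  by congr (_ - _ * _); rewrite mulrC.
- move=> k k_range.
  have [PCk PDk QCk QDk] := factors_neq0 k k_range.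
  rewrite /T (@prodZ1S _ PC k PCk) (@prodZ1S _ PD k PDk).
  rewrite (@prodZ1S _ QC k QCk) (@prodZ1S _ QD k QDk).
  by rewrite three_term_identity //; apply: ratio_product_step.
Qed.
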